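(* In the public bug bounty model described in the context, with fixed prizes $\boldsymbol v$, $v_a$ and complexity $q_a$, let $c_n$ be the symmetric equilibrium threshold with $n$ agents and $\kappa^*$ the largest fixed point in $[0,\infty)$ of $\Psi_\infty(\hat\kappa)=\sum_lv^l\mu^l\frac{1-e^{-q^l\hat\kappa}}{\underline c}+v_a\frac{1-e^{-q_a\hat\kappa}}{\underline c}$. Then $$W_n(c_n)\to W_\infty(\kappa^* )=\sum_lw^l\mu^l\big(1-e^{-q^l\kappa^*}\big)-\kappa^*\underline c\quad\text{as }n\to\infty,$$ where $W_n(\hat c)=\sum_lw^l\mu^l\big(1-(1-q^lF(\hat c))^n\big)-nF(\hat c)\hat c$.
   Context: Bug bounty model with $n$ agents, analysed as $n\to\infty$. There are $L$ potential organic bugs; bug $l$ exists with probability $\mu^l\in(0,1]$ (independently), has complexity $q^l\in(0,1]$, and the designer values it at $w^l\ge0$. Agents' private search costs are i.i.d. from a fixed distribution $F$ with support $[\underline c,\overline c]$, $0<\underline c<\overline c\le\infty$, continuous with full support, finite density $f$, $F/f$ non-decreasing. Budget $\overline v>0$ with $\overline v\ge\underline c$, and $\sum_lw^l\mu^lq^l\ge\underline c$. Prizes $v^l\ge0$ and one artificial bug (existing with certainty) with prize $v_a\ge0$ and complexity $q_a\in[0,1]$, $\sum_lv^l+v_a\le\overline v$. A searching agent (paying his/her cost) finds each existing bug of complexity $q$ with probability $q$, independently; a found bug's prize goes to one of its finders chosen uniformly at random. With $n$ agents, $\Phi_n(\hat c;q)$ is the probability that a searching agent wins the prize of an existing bug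 of complexity $q$ when each of the other $n-1$ agents searches iff his/her cost is at most $\hat c$; $\Psi_n(\hat c)=\sum_lv^l\mu^l\Phi_n(\hat c;q^l)+v_a\Phi_n(\hat c;q_a)$; the symmetric equilibrium threshold $c_n$ is $\underline c$ if $\Psi_n(\underline c)\le\underline c$, $\overline c$ if $\Psi_n(\overline c)\ge\overline c$, and otherwise the unique solution of $\hat c=\Psi_n(\hat c)$. *)

From Stdlib Require Import Reals.
From Coquelicot Require Import Coquelicot.
Open Scope R_scope.

Fixpoint sumL (L : nat) (g : nat -> R) : R :=
  match L with
  | O => 0
  | S k => sumL k g + g k
  end.

(* Phi_n(chat; q): probability that a searching agent wins the prize of an
   existing bug of complexity q, when each of the other n-1 agents searches iff
   his/her cost is <= chat (probability F chat), each searcher finds the bug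
   independently with prob. q, and the prize goes to a uniformly chosen finder.
   = P(agent finds) * E[ 1/(1+K) ],  K ~ Binomial(n-1, q F(chat)). *)
Definition Phi (F : R -> R) (n : nat) (chat q : R) : R :=
  let p := q * F chat in
  q * sumL n (fun k => Binomial.C (n - 1)%nat k * p ^ k * (1 - p) ^ (n - 1 - k)%nat / INR (k + 1)).

Definition Psi (F : R -> R) (L : nat) (mu q v : nat -> R) (va qa : R)
  (n : nat) (chat : R) : R :=
  sumL L (fun l => v l * mu l * Phi F n chat (q l)) + va * Phi F n chat qa.

Definition Psi_inf (clo : R) (L : nat) (mu q v : nat -> R) (va qa : R)
  (kappa : R) : R :=
  sumL L (fun l => v l * mu l * (1 - exp (- (q l * kappa))) / clo)
  + va * (1 - exp (- (qa * kappa))) / clo.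

Definition W (F : R -> R) (L : nat) (mu q w : nat -> R) (n : nat) (chat : R) : R :=
  sumL L (fun l => w l * mu l * (1 - (1 - q l * F chat) ^ n))
  - INR n * F chat * chat.

Definition W_inf (clo : R) (L : nat) (mu q w : nat -> R) (kappa : R) : R :=
  sumL L (fun l => w l * mu l * (1 - exp (- (q l * kappa)))) - kappa * clo.

(* Cost distribution F with support [clo, chi] (chi may be +infinity):
   a CDF, continuous, with full support (strictly increasing on the support),
   with a finite density f (F' = f on the interior, f > 0 there so that
   F/f is defined), and F/f non-decreasing on the interior of the support. *)
Definition cost_cdf (F f : R -> R) (clo : R) (chi : Rbar) : Prop :=
  0 < clo /\ Rbar_lt (Finite clo) chi /\
  (forall x, 0 <= F x <= 1) /\
  (forall x y, x <= y -> F x <= F y) /\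
  (forall x, continuous F x) /\
  (forall x, x <= clo -> F x = 0) /\
  (forall x, Rbar_le chi (Finite x) -> F x = 1) /\
  is_lim F p_infty 1 /\
  (forall x y, clo <= x -> x < y -> Rbar_le (Finite y) chi -> F x < F y) /\
  (forall x, clo < x -> Rbar_lt (Finite x) chi -> is_derive F x (f x)) /\
  (forall x, clo < x -> Rbar_lt (Finite x) chi -> 0 < f x) /\
  (forall x y, clo < x -> x <= y -> Rbar_lt (Finite y) chi ->
     F x / f x <= F y / f y).

Definition eq_threshold (Psin : R -> R) (clo : R) (chi : Rbar) (c : R) : Prop :=
  (Psin clo <= clo -> c = clo) /\
  (~ (Psin clo <= clo) ->
     match chi with
     | Finite ch =>
         (Psin ch >= ch -> c = ch) /\
         (~ (Psin ch >= ch) -> clo <= c <= ch /\ c = Psin c)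
     | _ => clo <= c /\ c = Psin c
     end).

From Stdlib Require Import Reals Lra Lia.
From Coquelicot Require Import Coquelicot.
Open Scope R_scope.

(* Write [kappa_n = n F(c_n)] for the expected number of searching agents and, for the prize
   profile [(a, b)] of the organic bugs followed by the artificial one,
   [G(kappa) = sum_l a_l (1 - exp(- b_l kappa))], so that [Psi_inf = G / clo].  The equilibrium
   condition [c_n = Psi_n(c_n)] reads [c_n kappa_n = G_n(F(c_n))] with
   [G_n(x) = sum_l a_l (1 - (1 - b_l x)^n)], and [|G_n(x) - G(n x)| <= n x^2 sum_l a_l].
   If [G'(0) = sum_l a_l b_l <= clo], nobody searches and [kstar = 0].  Otherwise [kappa_n] is
   bounded, so [F(c_n) -> 0] and [c_n -> clo]; [kappa_n] stays away from [0]; and [h(kappa_n) -> 0]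
   for the concave [h(kappa) = G(kappa) - clo kappa], which is positive near [0] and negative
   beyond its largest root [kstar], forcing [kappa_n -> kstar].  [W_n(c_n)] is the same Poisson
   approximation, with weights [w_l mu_l], minus [kappa_n c_n]. *)

Lemma sumL_ext L g h : (forall l, (l < L)%nat -> g l = h l) -> sumL L g = sumL L h.
Proof.
  induction L as [|L IH]; intros Hgh; simpl; [reflexivity|].
  rewrite IH, Hgh; auto.
Qed.

Lemma sumL_le L g h : (forall l, (l < L)%nat -> g l <= h l) -> sumL L g <= sumL L h.
Proof.
  induction L as [|L IH]; intros Hgh; simpl; [lra|].
  apply Rplus_le_compat; auto.
Qed.

Lemma sumL_lt L g h : (forall l, (l < L)%nat -> g l <= h l) ->
  (exists l, (l < L)%nat /\ g l < h l) -> sumL L g < sumL L h.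
Proof.
  induction L as [|L IH]; intros Hgh [j [Hj Hlt]]; simpl; [lia|].
  destruct (Nat.eq_dec j L) as [->|Hne].
  - apply Rplus_le_lt_compat; [apply sumL_le|]; auto.
  - apply Rplus_lt_le_compat; auto.
    apply IH; [auto|exists j; split; [lia|auto]].
Qed.

Lemma sumL_pos_ex L g : 0 < sumL L g -> exists l, (l < L)%nat /\ 0 < g l.
Proof.
  induction L as [|L IH]; simpl; intros Hpos; [lra|].
  destruct (Rlt_le_dec 0 (g L)) as [HL|HL]; [exists L; auto|].
  destruct IH as [l [Hl Hg]]; [lra|]. exists l; auto.
Qed.

Lemma sumL_0 L : sumL L (fun _ => 0) = 0.
Proof. induction L as [|L IH]; simpl; lra. Qed.

Lemma sumL_ge0 L g : (forall l, (l < L)%nat -> 0 <= g l) -> 0 <= sumL L g.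
Proof. intros Hg. rewrite <- (sumL_0 L). now apply sumL_le. Qed.

Lemma sumL_minus L g h : sumL L (fun l => g l - h l) = sumL L g - sumL L h.
Proof. induction L as [|L IH]; simpl; [lra|]. rewrite IH; lra. Qed.

Lemma sumL_scal L r g : sumL L (fun l => r * g l) = r * sumL L g.
Proof. induction L as [|L IH]; simpl; [lra|]. rewrite IH; lra. Qed.

Lemma sumL_abs L g : Rabs (sumL L g) <= sumL L (fun l => Rabs (g l)).
Proof.
  induction L as [|L IH]; simpl; [rewrite Rabs_R0; lra|].
  eapply Rle_trans; [apply Rabs_triang|]. lra.
Qed.

Lemma sumL_shift n g : sumL (S n) g = g 0%nat + sumL n (fun k => g (S k)).
Proof. induction n as [|n IH]; simpl in *; [lra|]. rewrite IH; lra. Qed.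

Lemma sum_f_R0_sumL g n : sum_f_R0 g n = sumL (S n) g.
Proof. induction n as [|n IH]; simpl in *; [lra|]. now rewrite IH. Qed.

Lemma C_succ m k : (k <= m)%nat ->
  INR (S m) * Binomial.C m k / INR (S k) = Binomial.C (S m) (S k).
Proof.
  intros Hk. unfold Binomial.C.
  replace (S m - S k)%nat with (m - k)%nat by lia.
  change (Factorial.fact (S m)) with (S m * Factorial.fact m)%nat.
  change (Factorial.fact (S k)) with (S k * Factorial.fact k)%nat.
  rewrite !mult_INR.
  pose proof (INR_fact_neq_0 m). pose proof (INR_fact_neq_0 k).
  pose proof (INR_fact_neq_0 (m - k)). pose proof (pos_INR k).
  rewrite !S_INR. field. repeat split; lra.
Qed.

(* [(m+1) p E[1/(1+K)] = 1 - (1-p)^(m+1)] for [K ~ Binomial(m, p)]. *)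
Lemma binomial_mean_inv_succ m p :
  INR (S m) * p *
    sumL (S m) (fun k => Binomial.C m k * p ^ k * (1 - p) ^ (m - k) / INR (k + 1))
  = 1 - (1 - p) ^ S m.
Proof.
  rewrite <- sumL_scal.
  rewrite (sumL_ext _ _ (fun k => Binomial.C (S m) (S k) * (p * p ^ k) * (1 - p) ^ (m - k))).
  2:{ intros k Hk. rewrite <- C_succ by lia.
      replace (INR (k + 1)) with (INR (S k)) by (f_equal; lia).
      pose proof (pos_INR k). rewrite (S_INR k). field. lra. }
  pose proof (binomial p (1 - p) (S m)) as Hbin.
  rewrite sum_f_R0_sumL, sumL_shift, C_n_0 in Hbin.
  replace (p + (1 - p)) with 1 in Hbin by ring.
  rewrite pow1, Nat.sub_0_r in Hbin. simpl pow in Hbin. simpl pow. lra.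
Qed.

Lemma one_minus_exp_le x : 1 - exp (- x) <= x.
Proof. pose proof (exp_ineq1_le (- x)). lra. Qed.

Lemma one_minus_exp_lt x : 0 < x -> 1 - exp (- x) < x.
Proof. intros Hx. pose proof (exp_ineq1 (- x) ltac:(lra)). lra. Qed.

Lemma one_minus_exp_ge t : 0 <= t -> t - t ^ 2 <= 1 - exp (- t).
Proof.
  intros Ht. pose proof (exp_ineq1_le t). pose proof (exp_pos t).
  assert (Hq : 0 < 1 - t + t ^ 2) by nra.
  assert (Hprod : 1 <= exp t * (1 - t + t ^ 2)).
  { apply Rle_trans with ((1 + t) * (1 - t + t ^ 2)); [nra|].
    apply Rmult_le_compat_r; lra. }
  rewrite exp_Ropp.
  assert (/ exp t <= 1 - t + t ^ 2); [|lra].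
  apply (Rmult_le_reg_l (exp t)); [lra|]. rewrite Rinv_r; lra.
Qed.

Lemma exp_le_1 x : 0 <= x -> exp (- x) <= 1.
Proof.
  intros Hx. rewrite <- exp_0.
  destruct (Req_dec x 0) as [->|Hne]; [rewrite Ropp_0; lra|].
  left. apply exp_increasing. lra.
Qed.

Lemma pow_le_1 y n : 0 <= y <= 1 -> y ^ n <= 1.
Proof. intros Hy. rewrite <- (pow1 n). apply pow_incr. lra. Qed.

Lemma pow_sub_le a b n : 0 <= a <= 1 -> 0 <= b <= 1 ->
  Rabs (a ^ n - b ^ n) <= INR n * Rabs (a - b).
Proof.
  intros Ha Hb. induction n as [|n IH]; [simpl; rewrite Rminus_diag, Rabs_R0; lra|].
  replace (a ^ S n - b ^ S n) with (a * (a ^ n - b ^ n) + b ^ n * (a - b)) by (simpl; ring).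
  eapply Rle_trans; [apply Rabs_triang|].
  rewrite !Rabs_mult, (Rabs_pos_eq a), (Rabs_pos_eq (b ^ n)), S_INR by (try apply pow_le; lra).
  pose proof (pow_le_1 b n Hb).
  pose proof (Rabs_pos (a - b)). pose proof (Rabs_pos (a ^ n - b ^ n)). nra.
Qed.

Lemma exp_opp_pow p n : exp (- p) ^ n = exp (- (INR n * p)).
Proof.
  induction n as [|n IH]; [simpl; rewrite Rmult_0_l, Ropp_0, exp_0; reflexivity|].
  simpl pow. rewrite IH, <- exp_plus, S_INR. f_equal. ring.
Qed.

Lemma pow_one_minus_le_exp p n : 0 <= p <= 1 -> (1 - p) ^ n <= exp (- (INR n * p)).
Proof.
  intros Hp. rewrite <- exp_opp_pow. apply pow_incr.
  pose proof (one_minus_exp_le p). lra.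
Qed.

Lemma pow_one_minus_sub_exp p n : 0 <= p <= 1 ->
  Rabs ((1 - p) ^ n - exp (- (INR n * p))) <= INR n * p ^ 2.
Proof.
  intros Hp. rewrite <- exp_opp_pow.
  pose proof (one_minus_exp_le p). pose proof (one_minus_exp_ge p (proj1 Hp)).
  pose proof (exp_le_1 p (proj1 Hp)). pose proof (exp_pos (- p)).
  eapply Rle_trans; [apply pow_sub_le; lra|].
  apply Rmult_le_compat_l; [apply pos_INR|]. rewrite Rabs_left1; lra.
Qed.

Lemma exp_convex t x y : 0 <= t <= 1 ->
  exp (t * x + (1 - t) * y) <= t * exp x + (1 - t) * exp y.
Proof.
  intros Ht. set (z := t * x + (1 - t) * y).
  assert (Htan : forall u, exp z * (1 + (u - z)) <= exp u).
  { intros u. replace (exp u) with (exp z * exp (u - z)) by (rewrite <- exp_plus; f_equal; ring).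
    apply Rmult_le_compat_l; [left; apply exp_pos|apply exp_ineq1_le]. }
  pose proof (Htan x). pose proof (Htan y).
  assert (t * (exp z * (1 + (x - z))) + (1 - t) * (exp z * (1 + (y - z))) = exp z)
    by (unfold z; ring).
  nra.
Qed.

(** * Concave functions and limits *)

Definition concave (h : R -> R) : Prop :=
  forall x y t, 0 <= t <= 1 -> t * h x + (1 - t) * h y <= h (t * x + (1 - t) * y).

Lemma concave_plus g h : concave g -> concave h -> concave (fun k => g k + h k).
Proof. intros Hg Hh x y t Ht. specialize (Hg x y t Ht). specialize (Hh x y t Ht). lra. Qed.

Lemma concave_sub_linear g r : concave g -> concave (fun k => g k - r * k).
Proof. intros Hg x y t Ht. specialize (Hg x y t Ht). lra. Qed.

Lemma concave_sumL L (g : nat -> R -> R) : (forall l, (l < L)%nat -> concave (g l)) ->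
  concave (fun k => sumL L (fun l => g l k)).
Proof.
  induction L as [|L IH]; intros Hg; simpl; [intros x y t Ht; lra|].
  apply (concave_plus (fun k => sumL L (fun l => g l k)) (g L)); auto.
Qed.

Lemma concave_one_minus_exp a b : 0 <= a -> concave (fun k => a * (1 - exp (- (b * k)))).
Proof.
  intros Ha x y t Ht.
  pose proof (exp_convex t (- (b * x)) (- (b * y)) Ht).
  replace (- (b * (t * x + (1 - t) * y))) with (t * - (b * x) + (1 - t) * - (b * y)) by ring.
  nra.
Qed.

Lemma concave_chord h x y z : concave h -> x <= y <= z ->
  h x * (z - y) + h z * (y - x) <= h y * (z - x).
Proof.
  intros Hh Hy. destruct (Req_dec x z) as [<-|Hxz].
  { replace y with x by lra. lra. }
  set (t := (z - y) / (z - x)).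
  assert (Ht : 0 <= t <= 1).
  { unfold t; split; [apply Rdiv_le_0_compat; lra|].
    apply Rmult_le_reg_r with (z - x); [lra|]. unfold Rdiv. rewrite Rmult_assoc, Rinv_l; lra. }
  pose proof (Hh x z t Ht) as Hc.
  replace (t * x + (1 - t) * z) with y in Hc by (unfold t; field; lra).
  replace (h x * (z - y) + h z * (y - x)) with ((t * h x + (1 - t) * h z) * (z - x))
    by (unfold t; field; lra).
  apply Rmult_le_compat_r; lra.
Qed.

Lemma concave_root_isolated h ks m eps : concave h -> 0 < h m -> h ks = 0 -> m < ks ->
  (forall x, ks < x -> h x < 0) -> 0 < eps ->
  exists delta, 0 < delta /\ forall x, m <= x -> eps <= Rabs (x - ks) -> delta <= Rabs (h x).
Proof.
  intros Hh Hm Hks Hmks Hneg Heps.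
  pose proof (Hneg (ks + eps) ltac:(lra)) as Hright.
  exists (Rmin (h m * eps / (ks - m)) (- h (ks + eps))).
  split; [apply Rmin_glb_lt; [apply Rdiv_lt_0_compat; nra|lra]|].
  intros x Hx Hdist. destruct (Rle_lt_dec x ks) as [Hle|Hgt].
  - rewrite Rabs_left1 in Hdist by lra.
    pose proof (concave_chord h m x ks Hh ltac:(lra)) as Hc. rewrite Hks in Hc.
    eapply Rle_trans; [apply Rmin_l|]. eapply Rle_trans; [|apply Rle_abs].
    apply (Rmult_le_reg_r (ks - m)); [lra|].
    unfold Rdiv. rewrite Rmult_assoc, Rinv_l by lra. nra.
  - rewrite Rabs_right in Hdist by lra.
    pose proof (concave_chord h ks (ks + eps) x Hh ltac:(lra)) as Hc. rewrite Hks in Hc.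
    eapply Rle_trans; [apply Rmin_r|]. rewrite <- Rabs_Ropp. eapply Rle_trans; [|apply Rle_abs].
    nra.
Qed.

Lemma neg_beyond_max_root h ks B : continuity h -> 0 <= ks ->
  (forall x, 0 <= x -> h x = 0 -> x <= ks) -> (forall x, B <= x -> h x < 0) ->
  forall x, ks < x -> h x < 0.
Proof.
  intros Hc Hks Hmax HB x Hx.
  destruct (Rlt_le_dec (h x) 0) as [|[Hpos|Hzero]]; [assumption| |];
    exfalso; [|assert (x <= ks) by (apply Hmax; lra); lra].
  set (y := Rmax B x + 1).
  assert (Hxy : x < y) by (unfold y; pose proof (Rmax_r B x); lra).
  assert (Hy : h y < 0) by (apply HB; unfold y; pose proof (Rmax_l B x); lra).
  destruct (IVT (fun z => - h z) x y) as [z [Hz Hhz]];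
    [apply continuity_opp; assumption|assumption|lra|lra|].
  assert (z <= ks) by (apply Hmax; lra). lra.
Qed.

Lemma eventually_INR_gt K : eventually (fun n => K < INR n).
Proof.
  pose proof is_lim_seq_INR as Hinf. apply is_lim_seq_spec in Hinf. exact (Hinf K).
Qed.

Lemma is_lim_seq_scal_null r u : is_lim_seq u 0 -> is_lim_seq (fun n => r * u n) 0.
Proof.
  intros Hu. replace (Finite 0) with (Finite (r * 0)) by (f_equal; ring).
  apply is_lim_seq_mult'; [apply is_lim_seq_const|exact Hu].
Qed.

Lemma is_lim_seq_null_of_mul_INR_le x K : (forall n, 0 <= x n) ->
  eventually (fun n => INR n * x n <= K) -> is_lim_seq x 0.
Proof.
  intros Hx Hev.
  assert (Hinv : is_lim_seq (fun n => K * / INR n) 0).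
  { replace (Finite 0) with (Rbar_mult K (Rbar_inv p_infty)) by (simpl; f_equal; ring).
    apply is_lim_seq_scal_l, is_lim_seq_inv; [apply is_lim_seq_INR|discriminate]. }
  apply is_lim_seq_le_le_loc with (fun _ => 0) (fun n => K * / INR n);
    [|apply is_lim_seq_const|exact Hinv].
  generalize (filter_and _ _ Hev (eventually_INR_gt 0)). apply filter_imp.
  intros n [HK Hn]. split; [apply Hx|].
  replace (x n) with (INR n * x n * / INR n) by (field; lra).
  apply Rmult_le_compat_r; [left; apply Rinv_0_lt_compat|]; lra.
Qed.

Lemma is_lim_seq_of_F_null F clo c : (forall x y, x <= y -> F x <= F y) ->
  (forall y, clo < y -> 0 < F y) -> eventually (fun n => clo <= c n) ->
  is_lim_seq (fun n => F (c n)) 0 -> is_lim_seq c clo.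
Proof.
  intros Fmono Fpos Hge HF. apply is_lim_seq_spec. intros [eps Heps]. simpl.
  apply is_lim_seq_spec in HF.
  specialize (HF (mkposreal _ (Fpos (clo + eps) ltac:(lra)))). simpl in HF.
  generalize (filter_and _ _ Hge HF). apply filter_imp. intros n [Hcn HFn].
  rewrite Rminus_0_r in HFn. pose proof (Rle_abs (F (c n))).
  rewrite Rabs_pos_eq by lra.
  destruct (Rlt_le_dec (c n) (clo + eps)) as [|Hfar]; [lra|].
  pose proof (Fmono _ _ Hfar). lra.
Qed.

Lemma is_lim_seq_concave_root h ks m u : concave h -> 0 < h m -> h ks = 0 ->
  (forall x, ks < x -> h x < 0) -> eventually (fun n => m <= u n) ->
  is_lim_seq (fun n => h (u n)) 0 -> is_lim_seq u ks.
Proof.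
  intros Hh Hm Hks Hneg Hev Hlim.
  assert (Hmks : m < ks).
  { destruct (Rtotal_order m ks) as [|[->|Hgt]]; [assumption|lra|].
    specialize (Hneg m Hgt). lra. }
  apply is_lim_seq_spec. intros [eps Heps]. simpl.
  destruct (concave_root_isolated h ks m eps Hh Hm Hks Hmks Hneg Heps) as [delta [Hd Hiso]].
  apply is_lim_seq_spec in Hlim. specialize (Hlim (mkposreal delta Hd)). simpl in Hlim.
  generalize (filter_and _ _ Hev Hlim). apply filter_imp. intros n [Hmn Hhn].
  rewrite Rminus_0_r in Hhn.
  destruct (Rlt_le_dec (Rabs (u n - ks)) eps) as [|Hfar]; [assumption|].
  specialize (Hiso (u n) Hmn Hfar). lra.
Qed.

(** * Bug profiles and their Poisson limit *)

Definition bug_profile (M : nat) (a b : nat -> R) : Prop :=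
  forall l, (l < M)%nat -> 0 <= a l /\ 0 <= b l <= 1.

Definition found_value (M : nat) (a b : nat -> R) (n : nat) (x : R) : R :=
  sumL M (fun l => a l * (1 - (1 - b l * x) ^ n)).

Definition found_value_inf (M : nat) (a b : nat -> R) (k : R) : R :=
  sumL M (fun l => a l * (1 - exp (- (b l * k)))).

Definition found_slope (M : nat) (a b : nat -> R) : R := sumL M (fun l => a l * b l).

Lemma found_value_inf_continuous M a b : continuity (found_value_inf M a b).
Proof.
  intros k. apply continuity_pt_filterlim.
  apply (ex_derive_continuous (K := R_AbsRing) (V := R_NormedModule)).
  unfold found_value_inf. induction M as [|M IH]; simpl.
  - apply ex_derive_const.
  - apply (ex_derive_plus (fun k => sumL M (fun l => a l * (1 - exp (- (b l * k)))))); [exact IH|].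
    auto_derive. auto.
Qed.

Lemma found_value_0 M a b n : found_value M a b n 0 = 0.
Proof.
  unfold found_value. transitivity (sumL M (fun _ => 0)); [|apply sumL_0].
  apply sumL_ext. intros l _.
  rewrite Rmult_0_r, Rminus_0_r, pow1. ring.
Qed.

Lemma found_value_inf_0 M a b : found_value_inf M a b 0 = 0.
Proof.
  unfold found_value_inf. transitivity (sumL M (fun _ => 0)); [|apply sumL_0].
  apply sumL_ext. intros l _.
  rewrite Rmult_0_r, Ropp_0, exp_0. ring.
Qed.

Section BugProfile.

Variables (M : nat) (a b : nat -> R).
Hypothesis Hab : bug_profile M a b.

Lemma found_value_inf_concave : concave (found_value_inf M a b).
Proof.
  apply (concave_sumL M (fun l k => a l * (1 - exp (- (b l * k))))).
  intros l Hl. apply concave_one_minus_exp, Hab, Hl.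
Qed.

Lemma found_value_inf_le_total k : found_value_inf M a b k <= sumL M a.
Proof.
  apply sumL_le. intros l Hl. destruct (Hab l Hl). pose proof (exp_pos (- (b l * k))). nra.
Qed.

Lemma found_value_inf_le_slope k : 0 <= k -> found_value_inf M a b k <= found_slope M a b * k.
Proof.
  intros Hk. unfold found_slope. rewrite Rmult_comm, <- sumL_scal.
  apply sumL_le. intros l Hl. destruct (Hab l Hl).
  pose proof (one_minus_exp_le (b l * k)). nra.
Qed.

Lemma found_value_inf_lt_slope k : 0 < k -> 0 < found_slope M a b ->
  found_value_inf M a b k < found_slope M a b * k.
Proof.
  intros Hk Hslope. unfold found_slope in *. rewrite Rmult_comm, <- sumL_scal.
  apply sumL_lt.
  - intros l Hl. destruct (Hab l Hl). pose proof (one_minus_exp_le (b l * k)). nra.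
  - destruct (sumL_pos_ex _ _ Hslope) as [l [Hl Habl]]. exists l. split; [exact Hl|].
    destruct (Hab l Hl).
    assert (0 < a l /\ 0 < b l) as [Ha Hb] by (split; nra).
    pose proof (one_minus_exp_lt (b l * k) ltac:(nra)). nra.
Qed.

Lemma found_value_inf_ge k : 0 <= k ->
  found_slope M a b * (k - k ^ 2) <= found_value_inf M a b k.
Proof.
  intros Hk. unfold found_slope. rewrite Rmult_comm, <- sumL_scal.
  apply sumL_le. intros l Hl. destruct (Hab l Hl) as [Ha Hb].
  pose proof (one_minus_exp_ge (b l * k) ltac:(nra)).
  assert (0 <= b l * (1 - b l) * k ^ 2)
    by (apply Rmult_le_pos; [apply Rmult_le_pos|apply pow2_ge_0]; lra).
  assert (b l * (k - k ^ 2) <= b l * k - (b l * k) ^ 2) by (simpl in *; lra).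
  apply Rle_trans with (a l * (b l * (k - k ^ 2))); [right; ring|].
  apply Rmult_le_compat_l; lra.
Qed.

Lemma found_value_range n x : 0 <= x <= 1 -> 0 <= found_value M a b n x <= sumL M a.
Proof.
  intros Hx. unfold found_value. split.
  - apply sumL_ge0. intros l Hl. destruct (Hab l Hl).
    pose proof (pow_le_1 (1 - b l * x) n ltac:(nra)). nra.
  - apply sumL_le. intros l Hl. destruct (Hab l Hl).
    pose proof (pow_le (1 - b l * x) n ltac:(nra)). nra.
Qed.

Lemma found_value_inf_le n x : 0 <= x <= 1 ->
  found_value_inf M a b (INR n * x) <= found_value M a b n x.
Proof.
  intros Hx. apply sumL_le. intros l Hl. destruct (Hab l Hl).
  pose proof (pow_one_minus_le_exp (b l * x) n ltac:(nra)).
  replace (b l * (INR n * x)) with (INR n * (b l * x)) by ring. nra.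
Qed.

Lemma found_value_sub_inf n x : 0 <= x <= 1 ->
  Rabs (found_value M a b n x - found_value_inf M a b (INR n * x))
  <= sumL M a * (INR n * x ^ 2).
Proof.
  intros Hx. unfold found_value, found_value_inf. rewrite <- sumL_minus.
  eapply Rle_trans; [apply sumL_abs|].
  rewrite (Rmult_comm (sumL M a)), <- sumL_scal.
  apply sumL_le. intros l Hl. destruct (Hab l Hl) as [Ha Hb].
  pose proof (pow_one_minus_sub_exp (b l * x) n ltac:(nra)) as Happrox.
  replace (b l * (INR n * x)) with (INR n * (b l * x)) by ring.
  replace (a l * (1 - (1 - b l * x) ^ n) - a l * (1 - exp (- (INR n * (b l * x)))))
    with (- (a l * ((1 - b l * x) ^ n - exp (- (INR n * (b l * x)))))) by ring.
  rewrite Rabs_Ropp, Rabs_mult, (Rabs_pos_eq (a l)) by lra.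
  rewrite (Rmult_comm _ (a l)). apply Rmult_le_compat_l; [lra|].
  eapply Rle_trans; [exact Happrox|].
  apply Rmult_le_compat_l; [apply pos_INR|].
  assert (0 <= (1 - b l * b l) * (x * x)) by (apply Rmult_le_pos; nra).
  simpl. nra.
Qed.

Lemma found_value_inf_root_0 r k : 0 < r -> found_slope M a b <= r ->
  0 <= k -> found_value_inf M a b k = r * k -> k = 0.
Proof.
  intros Hr Hslope Hk Hroot.
  destruct (Rle_lt_or_eq_dec 0 k Hk) as [Hpos|]; [exfalso|auto].
  pose proof (found_value_inf_le_slope k Hk).
  assert (r <= found_slope M a b) by (apply (Rmult_le_reg_r k); lra).
  pose proof (found_value_inf_lt_slope k Hpos ltac:(lra)).
  pose proof (Rmult_le_compat_r k _ _ Hk Hslope). lra.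
Qed.

Lemma found_value_sub_inf_null x K : (forall n, 0 <= x n <= 1) ->
  eventually (fun n => INR n * x n <= K) ->
  is_lim_seq (fun n => found_value M a b n (x n) - found_value_inf M a b (INR n * x n)) 0.
Proof.
  intros Hx HK.
  assert (Hnull : is_lim_seq x 0)
    by (apply (is_lim_seq_null_of_mul_INR_le x K); [intros n; apply Hx|exact HK]).
  set (A := sumL M a).
  assert (HA : 0 <= A).
  { unfold A. apply sumL_ge0. intros l Hl. apply Hab, Hl. }
  apply is_lim_seq_le_le_loc with (fun n => - (A * K) * x n) (fun n => A * K * x n);
    [|apply is_lim_seq_scal_null, Hnull|apply is_lim_seq_scal_null, Hnull].
  revert HK. apply filter_imp. intros n HK.
  rewrite Ropp_mult_distr_l_reverse. apply Rabs_le_between.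
  eapply Rle_trans; [apply found_value_sub_inf; auto|].
  fold A. destruct (Hx n).
  replace (A * (INR n * x n ^ 2)) with (A * (INR n * x n) * x n) by ring.
  apply Rmult_le_compat_r; [lra|]. apply Rmult_le_compat_l; lra.
Qed.

Lemma is_lim_seq_found_value x (k : R) : (forall n, 0 <= x n <= 1) ->
  is_lim_seq (fun n => INR n * x n) k ->
  is_lim_seq (fun n => found_value M a b n (x n)) (found_value_inf M a b k).
Proof.
  intros Hx Hk.
  assert (HK : eventually (fun n => INR n * x n <= k + 1)).
  { pose proof Hk as Hspec. apply is_lim_seq_spec in Hspec.
    specialize (Hspec (mkposreal 1 Rlt_0_1)). revert Hspec. apply filter_imp. simpl.
    intros n Hn. pose proof (Rle_abs (INR n * x n - k)). lra. }
  apply is_lim_seq_ext with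
    (fun n => (found_value M a b n (x n) - found_value_inf M a b (INR n * x n))
              + found_value_inf M a b (INR n * x n)); [intros n; ring|].
  replace (found_value_inf M a b k) with (0 + found_value_inf M a b k) by ring.
  apply is_lim_seq_plus'; [exact (found_value_sub_inf_null x (k + 1) Hx HK)|].
  apply is_lim_seq_continuous; [apply found_value_inf_continuous|exact Hk].
Qed.

End BugProfile.

(** * Equilibria with many agents *)

Section EquilibriumLimit.

Variables (F : R -> R) (clo : R) (M : nat) (a b : nat -> R) (c : nat -> R) (kstar : R).
Hypotheses (clo_pos : 0 < clo) (F_range : forall y, 0 <= F y <= 1)
  (F_mono : forall x y, x <= y -> F x <= F y) (F_pos : forall y, clo < y -> 0 < F y).
Hypotheses (Hab : bug_profile M a b) (slope_gt : clo < found_slope M a b).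
Hypothesis c_fixed : eventually (fun n =>
  clo < c n /\ c n * (INR n * F (c n)) = found_value M a b n (F (c n))).
Hypotheses (kstar_ge0 : 0 <= kstar) (kstar_root : found_value_inf M a b kstar = clo * kstar)
  (kstar_max : forall k, 0 <= k -> found_value_inf M a b k = clo * k -> k <= kstar).

Lemma searchers_ge0 n : 0 <= INR n * F (c n).
Proof. apply Rmult_le_pos; [apply pos_INR|apply F_range]. Qed.

Lemma searchers_bounded : eventually (fun n => INR n * F (c n) <= sumL M a / clo).
Proof.
  revert c_fixed. apply filter_imp. intros n [Hc Hfix].
  pose proof (found_value_range M a b Hab n (F (c n)) (F_range _)) as Hrange.
  pose proof (searchers_ge0 n).
  apply (Rmult_le_reg_l clo); [exact clo_pos|].
  replace (clo * (sumL M a / clo)) with (sumL M a) by (field; lra). nra.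
Qed.

Lemma threshold_lim : is_lim_seq c clo.
Proof.
  apply (is_lim_seq_of_F_null F); [exact F_mono|exact F_pos| |].
  - revert c_fixed. apply filter_imp. intros n [Hc _]. lra.
  - apply (is_lim_seq_null_of_mul_INR_le _ (sumL M a / clo));
      [intros n; apply F_range|exact searchers_bounded].
Qed.

Lemma searchers_ge : eventually (fun n =>
  (found_slope M a b - clo) / (2 * found_slope M a b) <= INR n * F (c n)).
Proof.
  set (S := found_slope M a b). assert (HS : clo < S) by exact slope_gt.
  assert (Hclose : eventually (fun n => c n < clo + (S - clo) / 2)).
  { pose proof threshold_lim as Hlim. apply is_lim_seq_spec in Hlim.
    specialize (Hlim (mkposreal ((S - clo) / 2) ltac:(lra))). revert Hlim. apply filter_imp.
    simpl. intros n Hn. pose proof (Rle_abs (c n - clo)). lra. }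
  generalize (filter_and _ _ c_fixed (filter_and _ _ Hclose (eventually_INR_gt 0))).
  apply filter_imp. intros n [[Hc Hfix] [Hn Hpos]].
  set (k := INR n * F (c n)) in *.
  assert (Hk : 0 < k) by (apply Rmult_lt_0_compat; [exact Hpos|apply F_pos, Hc]).
  (* [c k = G_n(F c) >= G(k) >= S (k - k^2)], hence [c >= S (1 - k)] *)
  pose proof (found_value_inf_le M a b Hab n (F (c n)) (F_range _)) as Hle.
  pose proof (found_value_inf_ge M a b Hab k (Rlt_le _ _ Hk)) as Hge. fold S k in Hle, Hge.
  assert (Hc_ge : S * (1 - k) <= c n).
  { apply (Rmult_le_reg_r k); [exact Hk|]. simpl in Hge. nra. }
  apply (Rmult_le_reg_l (2 * S)); [unfold S; lra|].
  replace (2 * S * ((S - clo) / (2 * S))) with (S - clo) by (field; lra). lra.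
Qed.

Lemma is_lim_seq_fixed_point_defect : is_lim_seq (fun n =>
  found_value_inf M a b (INR n * F (c n)) - clo * (INR n * F (c n))) 0.
Proof.
  set (K := sumL M a / clo).
  assert (Happrox := found_value_sub_inf_null M a b Hab (fun n => F (c n)) K
                       (fun n => F_range (c n)) searchers_bounded).
  assert (Hgap : is_lim_seq (fun n => (c n - clo) * (INR n * F (c n))) 0).
  { apply is_lim_seq_le_le_loc with (fun _ => 0) (fun n => K * (c n - clo));
      [|apply is_lim_seq_const|].
    - generalize (filter_and _ _ c_fixed searchers_bounded). apply filter_imp.
      intros n [[Hc _] HK]. fold K in HK. pose proof (searchers_ge0 n). split; nra.
    - replace (Finite 0) with (Finite (K * (clo - clo))) by (f_equal; ring).
      apply is_lim_seq_mult'; [apply is_lim_seq_const|].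
      apply is_lim_seq_minus'; [exact threshold_lim|apply is_lim_seq_const]. }
  replace (Finite 0) with (Finite (- 0 + 0)) by (f_equal; ring).
  apply is_lim_seq_ext_loc with (fun n =>
    - (found_value M a b n (F (c n)) - found_value_inf M a b (INR n * F (c n)))
    + (c n - clo) * (INR n * F (c n))).
  - revert c_fixed. apply filter_imp. intros n [_ Hfix]. rewrite <- Hfix. ring.
  - apply is_lim_seq_plus'; [apply is_lim_seq_opp in Happrox; exact Happrox|exact Hgap].
Qed.

Lemma searchers_lim : is_lim_seq (fun n => INR n * F (c n)) kstar.
Proof.
  set (S := found_slope M a b). assert (HS : clo < S) by exact slope_gt.
  set (h := fun k => found_value_inf M a b k - clo * k).
  set (m := (S - clo) / (2 * S)).
  assert (Hm : 0 < m) by (apply Rdiv_lt_0_compat; lra).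
  apply (is_lim_seq_concave_root h kstar m).
  - apply concave_sub_linear, found_value_inf_concave, Hab.
  - (* [h m >= S (m - m^2) - clo m = m (S - clo) / 2] *)
    pose proof (found_value_inf_ge M a b Hab m (Rlt_le _ _ Hm)) as Hge. fold S in Hge.
    assert (HSm : S * m = (S - clo) / 2) by (unfold m; field; lra).
    unfold h. simpl in Hge. nra.
  - unfold h. rewrite kstar_root. ring.
  - apply (neg_beyond_max_root h kstar ((sumL M a + 1) / clo)); [|exact kstar_ge0| |].
    + apply continuity_minus; [apply found_value_inf_continuous|].
      apply continuity_scal, derivable_continuous, derivable_id.
    + intros x Hx Hroot. apply kstar_max; [exact Hx|unfold h in Hroot; lra].
    + intros x Hx. unfold h.
      pose proof (found_value_inf_le_total M a b Hab x).
      assert (sumL M a + 1 <= clo * x); [|lra].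
      apply (Rmult_le_reg_r (/ clo)); [apply Rinv_0_lt_compat, clo_pos|].
      replace (clo * x * / clo) with x by (field; lra). exact Hx.
  - exact searchers_ge.
  - exact is_lim_seq_fixed_point_defect.
Qed.

End EquilibriumLimit.

(** * The bug bounty model *)

Definition extend (L : nat) (g : nat -> R) (x : R) (l : nat) : R :=
  if (l <? L)%nat then g l else x.

Lemma sumL_extend L g h x y (T : R -> R -> R) :
  sumL (S L) (fun l => T (extend L g x l) (extend L h y l))
  = sumL L (fun l => T (g l) (h l)) + T x y.
Proof.
  simpl. unfold extend at 3 4. rewrite Nat.ltb_irrefl. f_equal.
  apply sumL_ext. intros l Hl. unfold extend. now rewrite (proj2 (Nat.ltb_lt l L) Hl).
Qed.

(* The artificial bug is appended to the organic ones as bug number [L]. *)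
Definition prize_profile (L : nat) (mu v : nat -> R) (va : R) : nat -> R :=
  extend L (fun l => v l * mu l) va.

Definition cplx_profile (L : nat) (q : nat -> R) (qa : R) : nat -> R := extend L q qa.

Lemma bounty_bug_profiles L mu q w v va qa :
  (forall l, (l < L)%nat -> 0 < mu l <= 1 /\ 0 < q l <= 1 /\ 0 <= w l /\ 0 <= v l) ->
  0 <= va -> 0 <= qa <= 1 ->
  bug_profile (S L) (prize_profile L mu v va) (cplx_profile L q qa)
  /\ bug_profile L (fun l => w l * mu l) q.
Proof.
  intros Hl Hva Hqa. split; intros l Hlt.
  - unfold prize_profile, cplx_profile, extend.
    destruct (Nat.ltb_spec l L) as [Hl'|]; [|split; assumption].
    destruct (Hl l Hl') as (? & ? & _ & ?). split; [apply Rmult_le_pos|]; lra.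
  - destruct (Hl l Hlt) as (? & ? & ? & _). split; [apply Rmult_le_pos|]; lra.
Qed.

Lemma Phi_mul_nF F n c q : Phi F n c q * (INR n * F c) = 1 - (1 - q * F c) ^ n.
Proof.
  destruct n as [|m]; [simpl; lra|].
  rewrite <- (binomial_mean_inv_succ m (q * F c)). unfold Phi.
  replace (S m - 1)%nat with m by lia. ring.
Qed.

Lemma Phi_F0 F n c q : F c = 0 -> (1 <= n)%nat -> Phi F n c q = q.
Proof.
  intros HF Hn. destruct n as [|m]; [lia|]. unfold Phi.
  rewrite HF, Rmult_0_r, sumL_shift, (sumL_ext _ _ (fun _ => 0)), sumL_0.
  - rewrite C_n_0, Rminus_0_r, pow1. simpl. field.
  - intros k _. rewrite pow_i by lia. unfold Rdiv. ring.
Qed.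

Lemma Psi_mul_nF F L mu q v va qa n c :
  Psi F L mu q v va qa n c * (INR n * F c)
  = found_value (S L) (prize_profile L mu v va) (cplx_profile L q qa) n (F c).
Proof.
  unfold found_value, prize_profile, cplx_profile.
  rewrite (sumL_extend L _ _ _ _ (fun a b => a * (1 - (1 - b * F c) ^ n))).
  unfold Psi. rewrite Rmult_plus_distr_r, Rmult_comm, <- sumL_scal.
  rewrite Rmult_assoc, Phi_mul_nF. f_equal.
  apply sumL_ext. intros l _. rewrite <- Phi_mul_nF. ring.
Qed.

Lemma Psi_F0 F L mu q v va qa n c : F c = 0 -> (1 <= n)%nat ->
  Psi F L mu q v va qa n c = found_slope (S L) (prize_profile L mu v va) (cplx_profile L q qa).
Proof.
  intros HF Hn. unfold found_slope, prize_profile, cplx_profile.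
  rewrite (sumL_extend L _ _ _ _ Rmult). unfold Psi.
  rewrite Phi_F0 by assumption. f_equal.
  apply sumL_ext. intros l _. now rewrite Phi_F0.
Qed.

Lemma Psi_inf_fixed_iff clo L mu q v va qa k : 0 < clo ->
  Psi_inf clo L mu q v va qa k = k <->
  found_value_inf (S L) (prize_profile L mu v va) (cplx_profile L q qa) k = clo * k.
Proof.
  intros Hclo.
  assert (Hsum : Psi_inf clo L mu q v va qa k
    = found_value_inf (S L) (prize_profile L mu v va) (cplx_profile L q qa) k / clo).
  { unfold found_value_inf, prize_profile, cplx_profile.
    rewrite (sumL_extend L _ _ _ _ (fun a b => a * (1 - exp (- (b * k))))).
    unfold Psi_inf, Rdiv. rewrite Rmult_plus_distr_r, (Rmult_comm (sumL L _)), <- sumL_scal.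
    f_equal. apply sumL_ext. intros l _. ring. }
  rewrite Hsum. split; intros Hfix.
  - apply (f_equal (Rmult clo)) in Hfix. rewrite <- Hfix. field. lra.
  - rewrite Hfix. field. lra.
Qed.

Lemma eq_threshold_interior Psin clo chi c : eq_threshold Psin clo chi c ->
  clo < Psin clo -> (forall ch, chi = Finite ch -> Psin ch < ch) -> clo < c /\ c = Psin c.
Proof.
  intros [_ Hthr] Hlow Hhigh. specialize (Hthr ltac:(lra)).
  assert (Hin : clo <= c /\ c = Psin c).
  { destruct chi as [ch| |]; try exact Hthr.
    destruct Hthr as [_ Hthr]. specialize (Hhigh ch eq_refl).
    destruct Hthr as [[Hc _] Hfix]; [lra|]. split; assumption. }
  destruct Hin as [Hc Hfix]. split; [|exact Hfix].
  destruct Hc as [|<-]; [assumption|lra].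
Qed.

Lemma cost_cdf_pos F f clo chi : cost_cdf F f clo chi -> forall y, clo < y -> 0 < F y.
Proof.
  intros (_ & Hchi & _ & Fmono & _ & Fzero & _ & _ & Fstrict & _) y Hy.
  rewrite <- (Fzero clo (Rle_refl clo)).
  destruct chi as [ch| |]; simpl in Hchi; [|apply Fstrict; simpl; auto; lra|contradiction].
  apply Rlt_le_trans with (F (Rmin y ch)); [|apply Fmono, Rmin_l].
  apply Fstrict; [lra|apply Rmin_glb_lt; lra|simpl; apply Rmin_r].
Qed.

Lemma threshold_at_clo F f clo chi L mu q v va qa c n :
  cost_cdf F f clo chi ->
  found_slope (S L) (prize_profile L mu v va) (cplx_profile L q qa) <= clo ->
  (forall n, (1 <= n)%nat -> eq_threshold (Psi F L mu q v va qa n) clo chi (c n)) ->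
  (1 <= n)%nat -> c n = clo.
Proof.
  intros (_ & _ & _ & _ & _ & Fzero & _) Hslope Heq Hn.
  apply (proj1 (Heq n Hn)). rewrite Psi_F0; [exact Hslope|apply Fzero, Rle_refl|exact Hn].
Qed.

Lemma threshold_fixed_eventually F f clo chi L mu q v va qa c :
  cost_cdf F f clo chi ->
  bug_profile (S L) (prize_profile L mu v va) (cplx_profile L q qa) ->
  clo < found_slope (S L) (prize_profile L mu v va) (cplx_profile L q qa) ->
  (forall n, (1 <= n)%nat -> eq_threshold (Psi F L mu q v va qa n) clo chi (c n)) ->
  eventually (fun n => clo < c n /\ c n * (INR n * F (c n))
    = found_value (S L) (prize_profile L mu v va) (cplx_profile L q qa) n (F (c n))).
Proof.
  intros Hcdf Hab Hslope Heq.
  pose proof Hcdf as (Hclo & Hchi & F_range & _ & _ & Fzero & Fone & _).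
  set (total := sumL (S L) (prize_profile L mu v va)).
  assert (Htotal : 0 <= total) by (apply sumL_ge0; intros l Hl; apply Hab, Hl).
  generalize (eventually_INR_gt (total / clo)). apply filter_imp. intros n Hn.
  assert (Hn_pos : 0 < INR n) by (eapply Rle_lt_trans; [|exact Hn]; apply Rdiv_le_0_compat; lra).
  assert (Hn1 : (1 <= n)%nat) by (destruct n; [simpl in Hn_pos; lra|lia]).
  destruct (eq_threshold_interior _ _ _ _ (Heq n Hn1)) as [Hc Hfix].
  - rewrite Psi_F0 by first [apply Fzero; lra|exact Hn1]. exact Hslope.
  - (* everybody searches at [ch], so [n Psi_n(ch)] is at most the total prize *)
    intros ch ->. simpl in Hchi.
    pose proof (Psi_mul_nF F L mu q v va qa n ch) as Hmul. rewrite Fone in Hmul by (simpl; lra).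
    pose proof (found_value_range _ _ _ Hab n 1 ltac:(lra)) as Hrange. fold total in Hrange.
    assert (Psi F L mu q v va qa n ch * INR n < clo * INR n); [|nra].
    apply Rle_lt_trans with total; [lra|].
    apply (Rmult_lt_reg_r (/ clo)); [apply Rinv_0_lt_compat, Hclo|].
    replace (clo * INR n * / clo) with (INR n) by (field; lra). exact Hn.
  - split; [exact Hc|]. rewrite Hfix at 1. apply Psi_mul_nF.
Qed.

Theorem corollary1
  (F f : R -> R) (clo : R) (chi : Rbar)
  (L : nat) (mu q w v : nat -> R) (va qa vbar : R)
  (c : nat -> R) (kstar : R) :
  cost_cdf F f clo chi ->
  (forall l, (l < L)%nat ->
     0 < mu l <= 1 /\ 0 < q l <= 1 /\ 0 <= w l /\ 0 <= v l) ->
  0 <= va -> 0 <= qa <= 1 ->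
  0 < vbar -> clo <= vbar ->
  sumL L v + va <= vbar ->
  clo <= sumL L (fun l => w l * mu l * q l) ->
  (* c n is the symmetric equilibrium threshold with n agents *)
  (forall n, (1 <= n)%nat -> eq_threshold (Psi F L mu q v va qa n) clo chi (c n)) ->
  (* kstar is the largest fixed point of Psi_inf in [0, oo) *)
  0 <= kstar -> Psi_inf clo L mu q v va qa kstar = kstar ->
  (forall k, 0 <= k -> Psi_inf clo L mu q v va qa k = k -> k <= kstar) ->
  is_lim_seq (fun n => W F L mu q w n (c n)) (W_inf clo L mu q w kstar).
Proof.
  intros Hcdf Hl Hva Hqa _ _ _ _ Heq Hk0 Hkfix Hkmax.
  pose proof Hcdf as (Hclo & _ & F_range & F_mono & _ & F_zero & _).
  destruct (bounty_bug_profiles L mu q w v va qa Hl Hva Hqa) as [Hab Hw].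
  set (a := prize_profile L mu v va) in *. set (b := cplx_profile L q qa) in *.
  apply (Psi_inf_fixed_iff _ _ _ _ _ _ _ _ Hclo) in Hkfix.
  assert (Hkmax_root : forall k, 0 <= k -> found_value_inf (S L) a b k = clo * k -> k <= kstar)
    by (intros k Hk Hroot; apply Hkmax, Psi_inf_fixed_iff; assumption).
  change (is_lim_seq (fun n => found_value L (fun l => w l * mu l) q n (F (c n))
                               - INR n * F (c n) * c n)
           (found_value_inf L (fun l => w l * mu l) q kstar - kstar * clo)).
  destruct (Rle_lt_dec (found_slope (S L) a b) clo) as [Hlow|Hhigh].
  - rewrite (found_value_inf_root_0 _ _ _ Hab clo kstar Hclo Hlow Hk0 Hkfix).
    rewrite found_value_inf_0, Rmult_0_l, Rminus_0_r.
    apply is_lim_seq_ext_loc with (fun _ => 0); [|apply is_lim_seq_const].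
    exists 1%nat. intros n Hn.
    rewrite (threshold_at_clo _ _ _ _ _ _ _ _ _ _ c n Hcdf Hlow Heq Hn), F_zero, found_value_0
      by apply Rle_refl.
    ring.
  - pose proof (threshold_fixed_eventually _ _ _ _ _ _ _ _ _ _ c Hcdf Hab Hhigh Heq) as Hfixed.
    pose proof (cost_cdf_pos _ _ _ _ Hcdf) as F_pos.
    pose proof (searchers_lim F clo _ a b c kstar Hclo F_range F_mono F_pos Hab Hhigh Hfixed
                  Hk0 Hkfix Hkmax_root) as Hsearchers.
    apply is_lim_seq_minus'; [|apply is_lim_seq_mult'; [exact Hsearchers|]].
    + apply is_lim_seq_found_value; [exact Hw|intros n; apply F_range|exact Hsearchers].
    + exact (threshold_lim F clo _ a b c Hclo F_range F_mono F_pos Hab Hfixed).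
Qed.
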